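(* Let $X_1,\dots,X_n$ be i.i.d. with law $P_0$, and let $\{m_{\beta,\eta,\zeta}:\beta\in B,\eta\in\mathcal H_\eta,\zeta\in\Xi\}$ be measurable real functions, where $d$ is a metric on $\mathcal H_\eta$, $\beta_0\in\mathbb R^p$ and $\eta_0\in\mathcal H_\eta$. Suppose there are constants $C_1,C_2,C_3>0$ such that for all $\beta\in B,\eta\in\mathcal H_\eta,\zeta\in\Xi$, $$P_0(m_{\beta,\eta,\zeta}-m_{\beta,\eta_0,\zeta})\le-C_1d^2(\eta,\eta_0)+C_2\|\beta-\beta_0\|^2,$$ and for every $\delta>0$ and $n$, $$P_0^*\sup_{\beta\in B,\ \eta\in\mathcal H_\eta,\ \|\beta-\beta_0\|<\delta,\ d(\eta,\eta_0)<\delta,\ \zeta\in\Xi}\big|\mathbb G_n(m_{\beta,\eta,\zeta}-m_{\beta_0,\eta_0,\zeta})\big|\le C_3\phi_n(\delta),$$ for functions $\phi_n$ such that $\delta\mapsto\phi_n(\delta)/\delta^{a}$ is decreasing for some $a<2$. Let $\tilde\beta_n$ be a sequence of (random) elements and, for each $\zeta$, let $\hat\eta_{\tilde\beta_n}(\zeta)$ satisfy $\mathbb P_nm_{\tilde\beta_n,\hat\eta_{\tilde\beta_n}(\zeta),\zeta}\ge\mathbb P_nm_{\tilde\beta_n,\eta_0,\zeta}$ (e.g. a maximizer of $\eta\mapsto\mathbb P_nm_{\tilde\beta_n,\eta,\zeta}$), with $\Pr(\tilde\beta_n\in B,\ \hat\eta_{\tilde\beta_n}(\zeta)\in\mathcal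 H_\eta\ \forall\zeta\in\Xi)\to1$. Then for any sequence of positive numbers $r_n$ with $r_n^2\phi_n(1/r_n)\le\sqrt n$ for every $n$, $$\sup_{\zeta\in\Xi}r_n\,d(\hat\eta_{\tilde\beta_n}(\zeta),\eta_0)\le O^*_{P_0}\big(1+r_n\|\tilde\beta_n-\beta_0\|\big).$$
   Context: $\mathbb P_nf=n^{-1}\sum_if(X_i)$, $\mathbb G_nf=\sqrt n(\mathbb P_n-P_0)f$; $P_0^*$ denotes outer expectation and $O^*_{P_0}$ boundedness in outer probability. $\Xi$ is an arbitrary index set and $B\subset\mathbb R^p$. *)

From HB Require Import structures.
From mathcomp Require Import all_boot all_order all_algebra.
From mathcomp Require Import all_classical all_reals all_analysis measurable_realfun.
Set Implicit Arguments. Unset Strict Implicit. Unset Printing Implicit Defensive.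
Import Order.TTheory GRing.Theory Num.Theory.
Import numFieldNormedType.Exports.
Local Open Scope classical_set_scope.
Local Open Scope ring_scope.

Section Defs.
Context {R : realType}.

Definition enorm (p : nat) (v : 'rV[R]_p) : R :=
  Num.sqrt (\sum_(i < p) (v ord0 i) ^+ 2).

Context {dO dX : measure_display} {Omega : measurableType dO}
  {Xs : measurableType dX}.

Definition iid (P : probability Omega R) (P0 : probability Xs R)
  (X : nat -> Omega -> Xs) : Prop :=
  [/\ (forall i, measurable_fun setT (X i)),
      (forall i (A : set Xs), measurable A -> P (X i @^-1` A) = P0 A)
    & (forall (s : seq nat) (A : nat -> set Xs), uniq s ->
        (forall i, measurable (A i)) ->
        P (\big[setI/setT]_(i <- s) (X i @^-1` A i)) =
        (\prod_(i <- s) P (X i @^-1` A i))%E)].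

(* P0 f : expectation under the law (a real number, for integrable f) *)
Definition Pexp (P0 : probability Xs R) (f : Xs -> R) : R :=
  fine (\int[P0]_x (f x)%:E).

Definition Pn (X : nat -> Omega -> Xs) (n : nat) (w : Omega) (f : Xs -> R) : R :=
  n%:R^-1 * \sum_(i < n) f (X i w).

Definition Gn (P0 : probability Xs R) (X : nat -> Omega -> Xs) (n : nat)
  (w : Omega) (f : Xs -> R) : R :=
  Num.sqrt n%:R * (Pn X n w f - Pexp P0 f).

Definition outer_expect (P : probability Omega R) (Z : Omega -> \bar R) : \bar R :=
  ereal_inf [set e : \bar R | exists U : Omega -> \bar R,
    [/\ measurable_fun (setT : set Omega) U, (forall w, Z w <= U w)%E & (e = \int[P]_w U w)%E]].

Definition outer_prob (P : probability Omega R) (A : set Omega) : \bar R :=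
  ereal_inf [set e : \bar R | exists Bm : set Omega, [/\ measurable Bm, A `<=` Bm & e = P Bm]].

End Defs.

From HB Require Import structures.
From mathcomp Require Import all_boot all_order all_algebra.
From mathcomp Require Import all_classical all_reals all_analysis measurable_realfun.
From mathcomp.algebra_tactics Require Import ring lra.
Import Order.TTheory GRing.Theory Num.Theory.
Import numFieldNormedType.Exports.
Local Open Scope classical_set_scope.
Local Open Scope ring_scope.

Set Implicit Arguments.
Unset Strict Implicit.
Unset Printing Implicit Defensive.

(* Peeling argument.  Write d = d(eta_hat, eta0) and b = ||beta_tilde - beta0||.
   If r_n d > M (1 + r_n b) with M >= 2^(J+1) and M^2 >= 2 C2 / C1, then r_n d
   lies in a dyadic shell [2^j, 2^(j+1)) with j > J, and the margin condition
   dominates the C2 b^2 term, so comparing eta_hat with eta0 in the basic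
   inequality P_n m_eta_hat >= P_n m_eta0 forces the modulus of the empirical
   process on the ball of radius 2^(j+1)/r_n to exceed sqrt n C1 (2^j/r_n)^2/4.
   By Markov's inequality, the maximal inequality, the growth of phi_n and
   r_n^2 phi_n(1/r_n) <= sqrt n, the outer probability of that event is at most
   K (2^a/4)^j.  Since a < 2 these bounds are summable, and the tail over j > J
   is uniformly small in n. *)

Lemma exists_pow2_bracket (R : realType) (t : R) :
  1 <= t -> exists j : nat, 2 ^+ j <= t /\ t < 2 ^+ j.+1.
Proof.
move=> t_ge1.
have ex_k : exists k : nat, t < 2 ^+ k.
  have t_ge0 : 0 <= t by lra.
  exists (Num.bound t); apply: lt_le_trans (archi_boundP t_ge0) _.
  by rewrite -natrX ler_nat ltnW // ltn_expl.
case: (ex_minnP ex_k) => -[|j]; first by rewrite expr0 ltNge t_ge1.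
move=> t_lt2j minj; exists j; split => //; rewrite leNgt; apply/negP => /minj.
by rewrite ltnn.
Qed.

Lemma powR2_lt4 (R : realType) (a : R) : a < 2 -> 2 `^ a < 4.
Proof.
move=> a_lt2; have -> : (4 : R) = 2 `^ 2 by rewrite powR_mulrn //; ring.
rewrite /powR (negbTE (_ : (2 : R) != 0)) // ltr_expR ltr_pM2r //.
by apply: ln_gt0; lra.
Qed.

Lemma powR_exprMl (R : realType) (a c x : R) (k : nat) : 0 <= c -> 0 <= x ->
  (c ^+ k * x) `^ a = (c `^ a) ^+ k * x `^ a.
Proof.
move=> c_ge0 x_ge0; elim: k => [|k IH]; first by rewrite !expr0 !mul1r.
by rewrite !exprS -mulrA powRM ?mulr_ge0 ?exprn_ge0 // IH mulrA.
Qed.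

Lemma ratio_decreasing_expr_scale (R : realType) (phi : R -> R) (a c x : R) (k : nat) :
  (forall x y, 0 < x -> x <= y -> phi y / y `^ a <= phi x / x `^ a) ->
  1 <= c -> 0 < x -> phi (c ^+ k * x) <= (c `^ a) ^+ k * phi x.
Proof.
move=> decr c_ge1 x_gt0.
have c_gt0 : 0 < c by lra.
have := decr _ _ x_gt0 (ler_peMl (ltW x_gt0) (exprn_ege1 k c_ge1)).
rewrite powR_exprMl ?(ltW c_gt0) ?(ltW x_gt0) //.
rewrite ler_pdivrMr ?mulr_gt0 ?exprn_gt0 ?powR_gt0 //.
suff -> : phi x / x `^ a * ((c `^ a) ^+ k * x `^ a) = (c `^ a) ^+ k * phi x by [].
by field; rewrite gt_eqF ?powR_gt0.
Qed.

(* Markov's bound for the j-th shell: the maximal inequality at radius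
   2^(j+1)/r divided by the threshold s C1 (2^j/r)^2/4. *)
Lemma shell_ratio_le (R : realType) (phi : R -> R) (a C1 C3 r s : R) (j : nat) :
  0 < C1 -> 0 < C3 -> 0 < r -> 0 < s ->
  (forall x y, 0 < x -> x <= y -> phi y / y `^ a <= phi x / x `^ a) ->
  r ^+ 2 * phi r^-1 <= s ->
  C3 * phi (2 ^+ j.+1 / r) / (s * (C1 * (2 ^+ j / r) ^+ 2) / 4)
    <= 4 * C3 * 2 `^ a / C1 * (2 `^ a / 4) ^+ j.
Proof.
move=> C1_gt0 C3_gt0 r_gt0 s_gt0 decr rate.
have r2_gt0 : 0 < r ^+ 2 by rewrite exprn_gt0.
have phi_r : phi r^-1 <= s / r ^+ 2.
  by rewrite ler_pdivlMr // mulrC.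
have rV_gt0 : 0 < r^-1 by rewrite invr_gt0.
have two_ge1 : 1 <= 2 :> R by lra.
have phi_j := ratio_decreasing_expr_scale j.+1 decr two_ge1 rV_gt0.
have pa_gt0 : 0 < 2 `^ a by rewrite powR_gt0.
have pow4 : (4 : R) ^+ j = (2 ^+ j) ^+ 2.
  by rewrite -exprM mulnC exprM; congr (_ ^+ _); ring.
rewrite ler_pdivrMr ?mulr_gt0 ?divr_gt0 ?exprn_gt0 ?invr_gt0 //.
have -> : 4 * C3 * 2 `^ a / C1 * (2 `^ a / 4) ^+ j * (s * (C1 * (2 ^+ j / r) ^+ 2) / 4)
    = C3 * ((2 `^ a) ^+ j.+1 * (s / r ^+ 2)).
  by rewrite expr_div_n pow4 [in RHS]exprS; field; rewrite !gt_eqF ?exprn_gt0.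
apply: ler_wpM2l; first exact: ltW.
apply: le_trans phi_j _.
by rewrite ler_wpM2l ?exprn_ge0 ?powR_ge0.
Qed.

Lemma margin_dominates (R : realType) (C1 C2 M b d : R) :
  0 < C1 -> 0 <= C2 -> 1 <= M -> 2 * C2 / C1 <= M -> 0 <= b -> M * b <= d ->
  C2 * b ^+ 2 <= C1 / 2 * d ^+ 2.
Proof.
move=> C1_gt0 C2_ge0 M_ge1 M_c b_ge0 Mb_le.
have C2_le : C2 <= C1 / 2 * M ^+ 2.
  have -> : C2 = C1 / 2 * (2 * C2 / C1) by field; rewrite gt_eqF.
  by apply: ler_wpM2l; [lra | rewrite expr2; nra].
apply: le_trans (ler_wpM2r (exprn_ge0 2 b_ge0) C2_le) _.
rewrite -[C1 / 2 * _ * _]mulrA -exprMn; apply: ler_wpM2l; first lra.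
by rewrite !expr2 ler_pM // mulr_ge0 //; lra.
Qed.

Lemma geometric_tail_lt (R : realType) (K q eps : R) :
  0 < q -> q < 1 -> 0 < eps -> exists J : nat, K * q ^+ J / (1 - q) < eps.
Proof.
move=> q_gt0 q_lt1 eps_gt0.
have := @cvg_geometric R (K / (1 - q)) q; rewrite ger0_norm; last exact: ltW.
move=> /(_ q_lt1) /cvgr_lt /(_ eps eps_gt0) [N _ tailN].
by exists N; have := tailN N (leqnn N); rewrite /= mulrAC.
Qed.

Lemma measure_bigcup_geometric_tail (R : realType) (d : measure_display)
    (Omega : measurableType d) (mu : {measure set Omega -> \bar R})
    (C : nat -> set Omega) (K q : R) (J : nat) :
  0 <= K -> 0 < q -> q < 1 -> (forall k, measurable (C k)) ->
  (forall k, (mu (C k) <= (K * q ^+ k)%:E)%E) ->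
  (mu (\bigcup_k C (J + k)%N) <= (K * q ^+ J / (1 - q))%:E)%E.
Proof.
move=> K_ge0 q_gt0 q_lt1 mC muC.
have mCJ k : measurable (C (J + k)%N) by [].
have KqJ_ge0 : 0 <= K * q ^+ J by rewrite mulr_ge0 // exprn_ge0 // ltW.
apply: le_trans (measure_sigma_subadditive mu mCJ (bigcupT_measurable _ mCJ) (@subset_refl _ _)) _.
apply: (@le_trans _ _ (\sum_(0 <= k <oo) (K * q ^+ J * q ^+ k)%:E)%E).
  apply: lee_nneseries => [k _ _|k _]; first exact: measure_ge0.
  by apply: le_trans (muC _) _; rewrite lee_fin exprD mulrA.
apply: lime_le.
  by apply: is_cvg_nneseries => k _; rewrite lee_fin mulr_ge0 // exprn_ge0 // ltW.
apply: nearW => n; rewrite sumEFin lee_fin.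
have := @geometric_le_lim R n _ q KqJ_ge0 q_gt0; rewrite ger0_norm; last exact: ltW.
by move=> /(_ q_lt1).
Qed.

(* The slack [e] is needed because the infimum defining the outer expectation
   need not be attained. *)
Lemma outer_expect_markov (R : realType) (d : measure_display) (Omega : measurableType d)
    (P : probability Omega R) (Z : Omega -> \bar R) (c t e : R) :
  0 < t -> 0 < e -> (forall w, (0 <= Z w)%E) -> (outer_expect P Z <= c%:E)%E ->
  exists C, [/\ measurable C, [set w | (t%:E <= Z w)%E] `<=` C
    & (P C <= ((c + e) / t)%:E)%E].
Proof.
move=> t_gt0 e_gt0 Z_ge0 EZ.
have : (outer_expect P Z < (c + e)%:E)%E by apply: le_lt_trans EZ _; rewrite lte_fin; lra.
move=> /ereal_inf_lt [_ [U [mU ZU ->]] EU].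
have U_ge0 w : (0 <= U w)%E by apply: le_trans (Z_ge0 w) (ZU w).
have mC : measurable (setT `&` [set x | (t%:E <= `|U x|)%E]).
  by apply: emeasurable_fun_c_infty => //; exact: measurableT_comp.
exists (setT `&` [set x | (t%:E <= `|U x|)%E]); split => //.
  by move=> w /= tZ; split => //; rewrite gee0_abs //; exact: le_trans tZ (ZU w).
have := le_integral_abse P measurableT mU t_gt0.
under eq_integral => x _ do rewrite gee0_abs //.
move=> /le_lt_trans /(_ EU) markov.
by rewrite mulrC EFinM lee_pdivlMl // ltW.
Qed.

Lemma outer_prob_le_measure (R : realType) (d : measure_display) (Omega : measurableType d)
    (P : probability Omega R) (A C : set Omega) :
  measurable C -> A `<=` C -> (outer_prob P A <= P C)%E.
Proof. by move=> mC AC; apply: ereal_inf_lbound; exists C. Qed.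

Section empirical_process.
Context {R : realType} {dO dX : measure_display} {Omega : measurableType dO}
  {Xs : measurableType dX}.
Variables (P0 : probability Xs R) (X : nat -> Omega -> Xs).

Lemma PnB n w (f g : Xs -> R) :
  Pn X n w (fun x => f x - g x) = Pn X n w f - Pn X n w g.
Proof. by rewrite /Pn sumrB mulrBr. Qed.

Lemma PexpB (f g : Xs -> R) :
  P0.-integrable setT (EFin \o f) -> P0.-integrable setT (EFin \o g) ->
  Pexp P0 (fun x => f x - g x) = Pexp P0 f - Pexp P0 g.
Proof.
by move=> If Ig; rewrite /Pexp integralB_EFin // fineB //; exact: integrable_fin_num.
Qed.

Lemma GnB_common n w (f g h : Xs -> R) :
  P0.-integrable setT (EFin \o f) -> P0.-integrable setT (EFin \o g) ->
  P0.-integrable setT (EFin \o h) ->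
  Gn P0 X n w (fun x => f x - h x) - Gn P0 X n w (fun x => g x - h x)
    = Num.sqrt n%:R * (Pn X n w f - Pn X n w g - (Pexp P0 f - Pexp P0 g)).
Proof. by move=> If Ig Ih; rewrite /Gn !PnB !PexpB //; ring. Qed.

End empirical_process.

Section peeling.
Context {R : realType} {dO dX : measure_display} {Omega : measurableType dO}
  {Xs : measurableType dX}.
Variables (P : probability Omega R) (P0 : probability Xs R) (X : nat -> Omega -> Xs).
Variables (p : nat) (T Xi : Type) (B : set 'rV[R]_p) (H : set T) (dist : T -> T -> R).
Variables (beta0 : 'rV[R]_p) (eta0 : T) (m : 'rV[R]_p -> T -> Xi -> Xs -> R).
Variables (C1 C2 : R).

(* The supremum over the delta-ball in the maximal inequality; the extra [0]
   makes it nonnegative even when the ball is empty. *)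
Definition modulus (n : nat) (delta : R) (w : Omega) : \bar R :=
  ereal_sup ([set 0%E] `|` [set y | exists b e z,
    [/\ B b, H e, (enorm (b - beta0) < delta)%R, (dist e eta0 < delta)%R &
        y = (`| Gn P0 X n w (fun x => m b e z x - m beta0 eta0 z x) |)%:E]]).

Hypothesis dist_ge0 : forall x y, H x -> H y -> 0 <= dist x y.
Hypothesis H_eta0 : H eta0.
Hypothesis dist_eta0 : dist eta0 eta0 = 0.
Hypothesis m_integrable :
  forall b e z, B b -> H e -> P0.-integrable setT (EFin \o m b e z).
Hypothesis m0_integrable : forall z, P0.-integrable setT (EFin \o m beta0 eta0 z).
Hypothesis margin : forall b e z, B b -> H e ->
  Pexp P0 (fun x => m b e z x - m b eta0 z x)
    <= - C1 * dist e eta0 ^+ 2 + C2 * enorm (b - beta0) ^+ 2.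

Lemma modulus_ge0 n delta w : (0 <= modulus n delta w)%E.
Proof. by apply: ereal_sup_ubound; left. Qed.

(* Both (b, e) and (b, eta0) lie in the delta-ball, and the difference of their
   centred empirical processes is at least sqrt n C1 d^2 / 2, so one of the two
   has absolute value at least a quarter of that. *)
Lemma modulus_ge_gap n w b e z delta :
  B b -> H e -> Pn X n w (m b eta0 z) <= Pn X n w (m b e z) ->
  C2 * enorm (b - beta0) ^+ 2 <= C1 / 2 * dist e eta0 ^+ 2 ->
  enorm (b - beta0) < delta -> dist e eta0 < delta ->
  ((Num.sqrt n%:R * (C1 * dist e eta0 ^+ 2) / 4)%:E <= modulus n delta w)%E.
Proof.
move=> Bb He basic gap b_lt e_lt.
set Ge := Gn P0 X n w (fun x => m b e z x - m beta0 eta0 z x).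
set G0 := Gn P0 X n w (fun x => m b eta0 z x - m beta0 eta0 z x).
set D := C1 * dist e eta0 ^+ 2.
have Ie := m_integrable z Bb He; have I0 := m_integrable z Bb H_eta0.
have GeG0 : Num.sqrt n%:R * (D / 2) <= Ge - G0.
  rewrite /Ge /G0 GnB_common //; apply: ler_wpM2l; first exact: sqrtr_ge0.
  by have := margin z Bb He; rewrite PexpB // /D; lra.
have [big|big] : Num.sqrt n%:R * D / 4 <= `|Ge| \/ Num.sqrt n%:R * D / 4 <= `|G0|.
  have := ler_norm Ge; have := ler_norm (- G0); rewrite normrN.
  by have [|] := leP (Num.sqrt n%:R * D / 4) `|Ge|; [left | right; lra].
- apply: (@le_trans _ _ (`|Ge|%:E)%E); first by rewrite lee_fin.
  by apply: ereal_sup_ubound; right; exists b, e, z.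
- apply: (@le_trans _ _ (`|G0|%:E)%E); first by rewrite lee_fin.
  apply: ereal_sup_ubound; right; exists b, eta0, z; split => //.
  by rewrite dist_eta0; apply: le_lt_trans e_lt; exact: dist_ge0.
Qed.

Lemma exists_peeling_shell n (rn : R) (J : nat) w b e z :
  0 < C1 -> 0 <= C2 -> 0 < rn -> B b -> H e ->
  Pn X n w (m b eta0 z) <= Pn X n w (m b e z) ->
  (2 ^+ J.+1 + 2 * C2 / C1 + 1) * (1 + rn * enorm (b - beta0)) < rn * dist e eta0 ->
  exists2 j, (J < j)%N &
    ((Num.sqrt n%:R * (C1 * (2 ^+ j / rn) ^+ 2) / 4)%:E
       <= modulus n (2 ^+ j.+1 / rn) w)%E.
Proof.
move=> C1_gt0 C2_ge0 rn_gt0 Bb He basic.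
set M := _ + 1; set bn := enorm _; set d := dist e eta0 => rate.
have bn_ge0 : 0 <= bn by exact: sqrtr_ge0.
have d_ge0 : 0 <= d by exact: dist_ge0.
have c_ge0 : 0 <= 2 * C2 / C1 by apply: divr_ge0; lra.
have pow_ge0 : 0 <= (2 : R) ^+ J.+1 by rewrite exprn_ge0.
have [M_pow M_c M_ge1] : [/\ 2 ^+ J.+1 <= M, 2 * C2 / C1 <= M & 1 <= M].
  by rewrite /M; split; lra.
have Mrbn_ge0 : 0 <= M * (rn * bn) by rewrite !mulr_ge0 //; lra.
rewrite mulrDr mulr1 in rate.
have Mbn_le : M * bn <= d.
  by rewrite -(ler_pM2l rn_gt0); apply: ltW; rewrite mulrCA; lra.
have [j [lo hi]] : exists j : nat, 2 ^+ j <= rn * d /\ rn * d < 2 ^+ j.+1.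
  by apply: exists_pow2_bracket; lra.
exists j.
  by rewrite -ltnS -(@ltr_eXn2l R 2) //; lra.
have d_lt : d < 2 ^+ j.+1 / rn by rewrite ltr_pdivlMr // mulrC.
have gap := margin_dominates C1_gt0 C2_ge0 M_ge1 M_c bn_ge0 Mbn_le.
apply: le_trans (modulus_ge_gap Bb He basic gap _ d_lt); last first.
  by apply: le_lt_trans d_lt; apply: le_trans Mbn_le; rewrite ler_peMl //; lra.
have sq : (2 ^+ j / rn) ^+ 2 <= d ^+ 2.
  have lo' : 2 ^+ j / rn <= d by rewrite ler_pdivrMr // mulrC.
  by rewrite !expr2 ler_pM // divr_ge0 ?exprn_ge0 // ltW.
rewrite lee_fin ler_wpM2r // ler_wpM2l ?sqrtr_ge0 //.
by apply: ler_wpM2l => //; exact: ltW.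
Qed.

(* The [+ 1] in the constant absorbs the slack of [outer_expect_markov]. *)
Lemma modulus_shell_cover (phi : R -> R) (a C3 rn : R) (n j : nat) :
  0 < C1 -> 0 < C3 -> 0 < rn -> (0 < n)%N ->
  (forall x y, 0 < x -> x <= y -> phi y / y `^ a <= phi x / x `^ a) ->
  rn ^+ 2 * phi rn^-1 <= Num.sqrt n%:R ->
  (forall delta, 0 < delta -> (outer_expect P (modulus n delta) <= (C3 * phi delta)%:E)%E) ->
  exists C, [/\ measurable C,
    [set w | ((Num.sqrt n%:R * (C1 * (2 ^+ j / rn) ^+ 2) / 4)%:E
                <= modulus n (2 ^+ j.+1 / rn) w)%E] `<=` C
    & (P C <= ((4 * C3 * 2 `^ a / C1 + 1) * (2 `^ a / 4) ^+ j)%:E)%E].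
Proof.
move=> C1_gt0 C3_gt0 rn_gt0 n_gt0 decr rate maximal.
have s_gt0 : 0 < Num.sqrt (n%:R : R) by rewrite sqrtr_gt0 ltr0n.
set th := Num.sqrt n%:R * (C1 * (2 ^+ j / rn) ^+ 2) / 4.
have th_gt0 : 0 < th by rewrite /th !(mulr_gt0, divr_gt0, exprn_gt0) ?invr_gt0.
have q_gt0 : 0 < 2 `^ a / 4 by rewrite divr_gt0 ?powR_gt0.
have delta_gt0 : 0 < 2 ^+ j.+1 / rn by rewrite divr_gt0 ?exprn_gt0.
have [C [mC shellC PC]] := outer_expect_markov th_gt0 (mulr_gt0 th_gt0 (exprn_gt0 j q_gt0))
  (@modulus_ge0 n _) (maximal _ delta_gt0).
exists C; split => //; apply: le_trans PC _; rewrite lee_fin.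
rewrite mulrDl [th * _ / th]mulrAC divff ?gt_eqF // mul1r mulrDl mul1r lerD2r.
exact: shell_ratio_le.
Qed.

End peeling.

Theorem lemma4 (R : realType) (dO dX : measure_display)
  (Omega : measurableType dO) (Xs : measurableType dX)
  (P : probability Omega R) (P0 : probability Xs R)
  (X : nat -> Omega -> Xs)
  (p : nat) (T Xi : Type)
  (B : set 'rV[R]_p) (H : set T) (dist : T -> T -> R)
  (beta0 : 'rV[R]_p) (eta0 : T)
  (m : 'rV[R]_p -> T -> Xi -> Xs -> R)
  (C1 C2 C3 a : R) (phi : nat -> R -> R)
  (betat : nat -> Omega -> 'rV[R]_p) (etah : nat -> Xi -> Omega -> T)
  (r : nat -> R) :
  iid P P0 X ->
  (forall x y, H x -> H y -> 0 <= dist x y) ->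
  (forall x y, H x -> H y -> (dist x y = 0 <-> x = y)) ->
  (forall x y, H x -> H y -> dist x y = dist y x) ->
  (forall x y z, H x -> H y -> H z -> dist x z <= dist x y + dist y z) ->
  H eta0 ->
  (forall b e z, B b -> H e -> P0.-integrable setT (EFin \o m b e z)) ->
  (forall z, P0.-integrable setT (EFin \o m beta0 eta0 z)) ->
  0 < C1 -> 0 < C2 -> 0 < C3 ->
  (forall b e z, B b -> H e ->
     Pexp P0 (fun x => m b e z x - m b eta0 z x)
       <= - C1 * dist e eta0 ^+ 2 + C2 * enorm (b - beta0) ^+ 2) ->
  (forall (n : nat) (delta : R), (0 < n)%N -> 0 < delta ->
     (outer_expect P (fun w =>
        ereal_sup ([set 0%E] `|` [set y | exists b e z,
          [/\ B b, H e, (enorm (b - beta0) < delta)%R, (dist e eta0 < delta)%R &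
              y = (`| Gn P0 X n w (fun x => m b e z x - m beta0 eta0 z x) |)%:E]]))
      <= (C3 * phi n delta)%:E)%E) ->
  a < 2 ->
  (forall n x y, 0 < x -> x <= y -> phi n y / powR y a <= phi n x / powR x a) ->
  (forall n z w, (0 < n)%N ->
     Pn X n w (m (betat n w) eta0 z) <= Pn X n w (m (betat n w) (etah n z w) z)) ->
  (fun n => outer_prob P
     (~` [set w | B (betat n w) /\ forall z, H (etah n z w)])) @ \oo --> (0%:E : \bar R) ->
  (forall n, 0 < r n) ->
  (forall n, (0 < n)%N -> r n ^+ 2 * phi n (r n)^-1 <= Num.sqrt n%:R) ->
  forall eps : R, 0 < eps -> exists M : R, exists N : nat, forall n, (N <= n)%N ->
    (outer_prob P [set w |
       ((M * (1 + r n * enorm (betat n w - beta0)))%:E <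
        ereal_sup [set y | exists z, y = (r n * dist (etah n z w) eta0)%:E])%E]
     < eps%:E)%E.
Proof.
move=> _ dist_ge0 dist0 _ _ H_eta0 m_int m0_int C1_gt0 C2_gt0 C3_gt0 margin maximal
  a_lt2 decr basic bad_cvg r_gt0 rate eps eps_gt0.
have dist_eta0 : dist eta0 eta0 = 0 by exact/(dist0 _ _ H_eta0 H_eta0).
set K := 4 * C3 * 2 `^ a / C1 + 1; set q := 2 `^ a / 4.
have K_ge0 : 0 <= K by rewrite /K addr_ge0 // divr_ge0 ?mulr_ge0 ?powR_ge0 //; lra.
have q_gt0 : 0 < q by rewrite divr_gt0 ?powR_gt0.
have q_lt1 : q < 1 by rewrite ltr_pdivrMr ?mul1r ?powR2_lt4.
have eps2_gt0 : 0 < eps / 2 by lra.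
have [J tailJ] := geometric_tail_lt K q_gt0 q_lt1 eps2_gt0.
have [N _ badN] := bad_cvg _ (@nbhs_open_ereal_lt R 0 (fun=> eps / 2) eps2_gt0).
exists (2 ^+ J.+1 + 2 * C2 / C1 + 1), (maxn N 1) => n; rewrite geq_max => /andP[nN n_gt0].
have [_ [Bad [mBad badBad ->]] PBad] := ereal_inf_lt (badN n nN).
have [Cov /all_and3[mCov shellCov PCov]] := boolp.choice (fun j =>
  modulus_shell_cover j C1_gt0 C3_gt0 (r_gt0 n) n_gt0 (decr n) (rate n n_gt0)
    (fun delta => maximal n delta n_gt0)).
have mCovJ : measurable (\bigcup_k Cov (J + k)%N) by exact: bigcupT_measurable.
apply: (@le_lt_trans _ _ (P (Bad `|` \bigcup_k Cov (J + k)%N))).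
  apply: outer_prob_le_measure; first exact: measurableU.
  move=> w /ereal_sup_gt[_ [z ->]]; rewrite lte_fin => rate_z.
  have [[Bb He]|] := pselect (B (betat n w) /\ forall z, H (etah n z w)); last first.
    by left; apply: badBad.
  have [j Jj shell_j] := exists_peeling_shell dist_ge0 H_eta0 dist_eta0 m_int m0_int
    margin C1_gt0 (ltW C2_gt0) (r_gt0 n) Bb (He z) (basic n z w n_gt0) rate_z.
  right; exists (j - J)%N => //; rewrite subnKC; last exact: ltnW.
  exact: shellCov shell_j.
apply: le_lt_trans (measureU2 _ mBad mCovJ) _.
rewrite (_ : eps = eps / 2 + eps / 2) ?EFinD; last by field.
apply: lte_leD => //.
  by rewrite ge0_fin_numE ?measure_ge0 //; exact: le_lt_trans (probability_le1 P mCovJ) (ltry _).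
apply: le_trans (measure_bigcup_geometric_tail J K_ge0 q_gt0 q_lt1 mCov PCov) _.
by rewrite lee_fin; exact: ltW.
Qed.
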